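(* Let $q_1,\dots,q_5\in\widehat{\mathbb H}$ be five distinct points not lying on a single 2-sphere or 2-plane. Then any fractional linear transformation $T$ of $\widehat{\mathbb H}$ is uniquely determined by its values $T(q_n)$, $n=1,\dots,5$; i.e., if $T,T'$ are fractional linear transformations with $T(q_n)=T'(q_n)$ for $n=1,\dots,5$, then $T=T'$.
   Context: $\mathbb H$ denotes the quaternions (identified with $\mathbb R^4$), $\widehat{\mathbb H}=\mathbb H\cup\{\infty\}$. A fractional linear transformation of $\widehat{\mathbb H}$ is a map $q\mapsto(aq+b)(cq+d)^{-1}$ with $\begin{pmatrix}a&b\\c&d\end{pmatrix}\in GL(2,\mathbb H)$ invertible. *)

From HB Require Import structures.
From mathcomp Require Import all_boot all_order all_algebra.
From mathcomp Require Import reals.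
Set Implicit Arguments. Unset Strict Implicit. Unset Printing Implicit Defensive.
Import Order.TTheory GRing.Theory Num.Theory.
Local Open Scope ring_scope.

Section Quat.
Variable R : realType.

Record quat := Quat { qr : R; qi : R; qj : R; qk : R }.

Definition qzero : quat := Quat 0 0 0 0.
Definition qone  : quat := Quat 1 0 0 0.

Definition qadd (x y : quat) : quat :=
  Quat (qr x + qr y) (qi x + qi y) (qj x + qj y) (qk x + qk y).
Definition qopp (x : quat) : quat := Quat (- qr x) (- qi x) (- qj x) (- qk x).
Definition qsub (x y : quat) : quat := qadd x (qopp y).
Definition qscale (s : R) (x : quat) : quat :=
  Quat (s * qr x) (s * qi x) (s * qj x) (s * qk x).

Definition qmul (x y : quat) : quat :=
  Quat (qr x * qr y - qi x * qi y - qj x * qj y - qk x * qk y)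
       (qr x * qi y + qi x * qr y + qj x * qk y - qk x * qj y)
       (qr x * qj y - qi x * qk y + qj x * qr y + qk x * qi y)
       (qr x * qk y + qi x * qj y - qj x * qi y + qk x * qr y).

Definition qconj (x : quat) : quat := Quat (qr x) (- qi x) (- qj x) (- qk x).

Definition qdot (x y : quat) : R :=
  qr x * qr y + qi x * qi y + qj x * qj y + qk x * qk y.
Definition qnorm2 (x : quat) : R := qdot x x.

(** Inverse x^{-1} = conj x / |x|^2 (only used for x <> 0). *)
Definition qinv (x : quat) : quat := qscale (qnorm2 x)^-1 (qconj x).

Definition qeqb (x y : quat) : bool :=
  [&& qr x == qr y, qi x == qi y, qj x == qj y & qk x == qk y].
Definition qis0 (x : quat) : bool := qeqb x qzero.

(** The extended quaternions  H^ = H ∪ {∞}:  None is ∞. *)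
Definition Hhat := option quat.

Definition GL2H (a b c d : quat) : Prop :=
  exists a' b' c' d' : quat,
    [/\ qadd (qmul a a') (qmul b c') = qone, qadd (qmul a b') (qmul b d') = qzero,
        qadd (qmul c a') (qmul d c') = qzero & qadd (qmul c b') (qmul d d') = qone]
    /\
    [/\ qadd (qmul a' a) (qmul b' c) = qone, qadd (qmul a' b) (qmul b' d) = qzero,
        qadd (qmul c' a) (qmul d' c) = qzero & qadd (qmul c' b) (qmul d' d) = qone].

Definition flt (a b c d : quat) (x : Hhat) : Hhat :=
  match x with
  | Some q =>
      let den := qadd (qmul c q) d in
      if qis0 den then None else Some (qmul (qadd (qmul a q) b) (qinv den))
  | None => if qis0 c then None else Some (qmul a (qinv c))
  end.

(** A 2-sphere in H = R^4: the points x with |x - c| = r lying in the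
    3-dimensional affine subspace through c orthogonal to n (n <> 0, r > 0). *)
Definition on_2sphere (c n : quat) (r : R) (x : quat) : Prop :=
  qnorm2 (qsub x c) = r ^+ 2 /\ qdot (qsub x c) n = 0.

Definition lin_indep2 (u v : quat) : Prop :=
  forall s t : R, qadd (qscale s u) (qscale t v) = qzero -> s = 0 /\ t = 0.
Definition on_2plane (p u v : quat) (x : quat) : Prop :=
  exists s t : R, x = qadd p (qadd (qscale s u) (qscale t v)).

(** The points pts lie on a single 2-sphere (all finite) or on a single
    2-plane of H^ (a 2-plane of H together with ∞). *)
Definition on_common_2sphere_or_2plane (I : Type) (pts : I -> Hhat) : Prop :=
  (exists (c n : quat) (r : R), 0 < r /\ n <> qzero /\
     forall i, exists x, pts i = Some x /\ on_2sphere c n r x)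
  \/
  (exists p u v : quat, lin_indep2 u v /\
     forall i, pts i = None \/ exists x, pts i = Some x /\ on_2plane p u v x).

End Quat.

From HB Require Import structures.
From mathcomp Require Import all_boot all_order all_algebra.
From mathcomp Require Import reals ring lra.
Set Implicit Arguments. Unset Strict Implicit. Unset Printing Implicit Defensive.
Import Order.TTheory GRing.Theory Num.Theory.
Local Open Scope ring_scope.

(* If T and T' agree at the q n, every q n is a fixed point of the
   transformation of N = M^-1 M' = [[A, B], [C, D]]: A x + B = x (C x + D), and
   C = 0 if x = oo.  Subtract this relation at a finite fixed point x0.
   If C = 0, every y = x - x0 satisfies y D = A y; unless A = D is real, these
   solutions lie in a real 2-plane (given one non-zero solution y1, the others
   lie in (R + R A) y1, R + R A being the centraliser of the non-real A), so the
   points lie on a 2-plane.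
   If C <> 0, all points are finite and w = (x - x0)^-1 solves the Sylvester
   equation w A' - D' w = C; hence the w lie on an affine 2-plane, and its image
   under inversion lies on a 2-sphere or a 2-plane through x0.
   So for points in general position N is a non-zero real scalar, and M' = M N
   induces the same transformation as M. *)

Lemma quat_ext (R : realType) (x y : quat R) :
  qr x = qr y -> qi x = qi y -> qj x = qj y -> qk x = qk y -> x = y.
Proof. by case: x => ????; case: y => ???? /= -> -> -> ->. Qed.

Ltac quat_ring := apply: quat_ext => /=; ring.

Section QuaternionDivisionRing.
Variable R : realType.
Local Notation H := (quat R).

Definition quat_tuple (x : H) := (qr x, qi x, qj x, qk x).
Definition tuple_quat (t : R * R * R * R) : H := let: (a, b, c, d) := t in Quat a b c d.
Lemma quat_tupleK : cancel quat_tuple tuple_quat. Proof. by case. Qed.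
HB.instance Definition _ := Choice.copy H (can_type quat_tupleK).

Lemma qaddA : associative (@qadd R). Proof. by move=> ???; quat_ring. Qed.
Lemma qaddC : commutative (@qadd R). Proof. by move=> ??; quat_ring. Qed.
Lemma qadd0q : left_id (qzero R) (@qadd R). Proof. by move=> ?; quat_ring. Qed.
Lemma qaddNq : left_inverse (qzero R) (@qopp R) (@qadd R). Proof. by move=> ?; quat_ring. Qed.
Lemma qmulA : associative (@qmul R). Proof. by move=> ???; quat_ring. Qed.
Lemma qmul1q : left_id (qone R) (@qmul R). Proof. by move=> ?; quat_ring. Qed.
Lemma qmulq1 : right_id (qone R) (@qmul R). Proof. by move=> ?; quat_ring. Qed.
Lemma qmulDl : left_distributive (@qmul R) (@qadd R). Proof. by move=> ???; quat_ring. Qed.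
Lemma qmulDr : right_distributive (@qmul R) (@qadd R). Proof. by move=> ???; quat_ring. Qed.
Lemma qone_neq0 : qone R != qzero R.
Proof. by apply/negP => /eqP /(f_equal (@qr R)) /= /eqP; rewrite oner_eq0. Qed.

HB.instance Definition _ := GRing.isNzRing.Build H qaddA qaddC qadd0q qaddNq
  qmulA qmul1q qmulq1 qmulDl qmulDr qone_neq0.

Lemma qnorm2_ge0 (x : H) : 0 <= qnorm2 x.
Proof. by case: x => a b c d; rewrite /qnorm2 /qdot /=; nra. Qed.

Lemma qnorm2_eq0 (x : H) : (qnorm2 x == 0) = (x == 0).
Proof.
apply/eqP/eqP => [|->]; last by rewrite /qnorm2 /qdot /= !mulr0 !addr0.
case: x => a b c d; rewrite /qnorm2 /qdot /= => E.
by apply: quat_ext => /=; nra.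
Qed.

Lemma qnorm2_gt0 (x : H) : x != 0 -> 0 < qnorm2 x.
Proof. by move=> nx; rewrite lt_def qnorm2_eq0 nx qnorm2_ge0. Qed.

Lemma qmulVq (x : H) : x != 0 -> qmul (qinv x) x = 1.
Proof.
rewrite -qnorm2_eq0; case: x => a b c d; rewrite /qnorm2 /qdot /= => nz.
by apply: quat_ext; rewrite /= /qnorm2 /qdot /=; field.
Qed.

Lemma qmulqV (x : H) : x != 0 -> qmul x (qinv x) = 1.
Proof.
rewrite -qnorm2_eq0; case: x => a b c d; rewrite /qnorm2 /qdot /= => nz.
by apply: quat_ext; rewrite /= /qnorm2 /qdot /=; field.
Qed.

Definition qunit : pred H := fun x => x != 0.

Lemma qunitrP (x y : H) : y * x = 1 /\ x * y = 1 -> qunit x.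
Proof.
case=> _ h; apply/eqP => x0; move: h; rewrite x0 mul0r => /eqP.
by rewrite eq_sym oner_eq0.
Qed.

Lemma qinv0 : {in [predC qunit], (@qinv R) =1 id}.
Proof.
move=> x; rewrite inE /qunit negbK => /eqP ->.
by apply: quat_ext => /=; rewrite !(invr0, mul0r, mulr0, oppr0).
Qed.

HB.instance Definition _ := GRing.NzRing_hasMulInverse.Build H
  qmulVq qmulqV qunitrP qinv0.

Lemma qunitE (x : H) : (x \is a GRing.unit) = (x != 0). Proof. by []. Qed.

Lemma qinvE (x : H) : qinv x = x^-1. Proof. by []. Qed.

Lemma qis0E (x : H) : qis0 x = (x == 0).
Proof.
apply/idP/eqP => [|->]; last by rewrite /qis0 /qeqb /= !eqxx.
by case/and4P => /eqP ? /eqP ? /eqP ? /eqP ?; apply: quat_ext.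
Qed.

End QuaternionDivisionRing.

Section RealScalars.
Variable R : realType.
Local Notation H := (quat R).

Definition realq (s : R) : H := Quat s 0 0 0.
Definition is_realq (x : H) := [/\ qi x = 0, qj x = 0 & qk x = 0].

Lemma qscaleE s (x : H) : qscale s x = realq s * x. Proof. by quat_ring. Qed.
Lemma realq_comm s (x : H) : realq s * x = x * realq s. Proof. by quat_ring. Qed.
Lemma realqD s t : realq (s + t) = realq s + realq t. Proof. by quat_ring. Qed.
Lemma realqM s t : realq (s * t) = realq s * realq t. Proof. by quat_ring. Qed.
Lemma realq0 : realq 0 = 0. Proof. by quat_ring. Qed.

Lemma realq_eq0 s : (realq s == 0) = (s == 0).
Proof. by apply/eqP/eqP => [/(f_equal (@qr R))|->] //; exact: realq0. Qed.

Lemma realqE (x : H) : is_realq x -> x = realq (qr x).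
Proof. by case: x => a b c d [/= -> -> ->]. Qed.

Lemma lin_indep2E (u v : H) :
  lin_indep2 u v <-> forall s t, realq s * u + realq t * v = 0 -> s = 0 /\ t = 0.
Proof. by split=> h s t; move: (h s t); rewrite !qscaleE. Qed.

Definition qI : H := Quat 0 1 0 0.

Lemma lin_indep2_1I : lin_indep2 1 qI.
Proof.
move=> s t; rewrite !qscaleE => /(congr1 (fun x : H => (qr x, qi x))) /=.
by case=> h1 h2; split; lra.
Qed.

Lemma realq_lin_indep (d : H) s t :
  ~ is_realq d -> realq s + realq t * d = 0 -> s = 0 /\ t = 0.
Proof.
case: d => d0 d1 d2 d3 nr /(congr1 (@quat_tuple R)).
rewrite /quat_tuple /= !(mul0r, subr0, addr0, add0r) => -[h0 h1 h2 h3].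
have t0 : t = 0.
  apply/eqP; apply: contraT => tn; case: nr; split; apply/eqP;
    [move/eqP: h1 | move/eqP: h2 | move/eqP: h3]; by rewrite mulf_eq0 (negPf tn).
by split=> //; move: h0; rewrite t0; lra.
Qed.

Lemma cross0_proj (z1 z2 z3 d1 d2 d3 : R) :
  z3 * d1 = z1 * d3 -> z1 * d2 = z2 * d1 ->
  z1 * (d1 * d1 + d2 * d2 + d3 * d3) = (z1 * d1 + z2 * d2 + z3 * d3) * d1.
Proof.
move=> h2 h3.
have -> : z1 * (d1 * d1 + d2 * d2 + d3 * d3) = z1 * d1 * d1 + (z1 * d2) * d2 + (z1 * d3) * d3
  by ring.
by rewrite h3 -h2; ring.
Qed.

Lemma qcomm_nonreal (d z : H) :
  ~ is_realq d -> z * d = d * z -> exists s t, z = realq s + realq t * d.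
Proof.
case: d => d0 d1 d2 d3; case: z => z0 z1 z2 z3 nr E.
move: (f_equal (@qi R) E) (f_equal (@qj R) E) (f_equal (@qk R) E) => /= E1 E2 E3.
have h1 : z2 * d3 = z3 * d2 by lra.
have h2 : z3 * d1 = z1 * d3 by lra.
have h3 : z1 * d2 = z2 * d1 by lra.
have nz : d1 * d1 + d2 * d2 + d3 * d3 != 0.
  by apply/eqP => h; apply: nr; rewrite /is_realq /=; split; nra.
set t := (z1 * d1 + z2 * d2 + z3 * d3) / (d1 * d1 + d2 * d2 + d3 * d3).
have td : forall zi di, zi * (d1 * d1 + d2 * d2 + d3 * d3) = (z1 * d1 + z2 * d2 + z3 * d3) * di ->
    zi = t * di.
  by move=> zi di e; apply: (mulIf nz); rewrite e mulrAC /t divfK.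
exists (z0 - t * d0), t; apply: quat_ext => /=.
- by ring.
- by rewrite (td z1 d1 (cross0_proj h2 h3)); ring.
- by rewrite (td z2 d2); [ring | have := cross0_proj h3 h1; lra].
- by rewrite (td z3 d3); [ring | have := cross0_proj h1 h2; lra].
Qed.

Lemma intertwiner_span (a d : H) : ~ (is_realq d /\ a = d) ->
  exists u v, lin_indep2 u v /\
    forall w, w * a = d * w -> exists s t, w = realq s * u + realq t * v.
Proof.
move=> ndr.
have [[w1 [w1n0 hw1]] | none] := boolp.pselect (exists w1, w1 != 0 /\ w1 * a = d * w1);
    last first.
  exists 1, qI; split; first exact: lin_indep2_1I.
  move=> w hw; exists 0, 0; rewrite realq0 !mul0r addr0.
  by apply/eqP; apply: contraT => wn; case: none; exists w.
have w1u : w1 \is a GRing.unit by rewrite qunitE.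
have aE : a = w1^-1 * d * w1 by rewrite -mulrA -hw1 mulKr.
have nr : ~ is_realq d.
  move=> rd; apply: ndr; split=> //.
  by rewrite aE (realqE rd) -realq_comm -mulrA mulVr ?mulr1.
exists w1, (d * w1); split.
  apply/lin_indep2E => s t; rewrite mulrA -mulrDl.
  move/(congr1 (fun x => x * w1^-1)); rewrite mulrK // mul0r.
  exact: realq_lin_indep nr.
move=> w hw.
have hc : w * w1^-1 * d = d * (w * w1^-1) by rewrite mulrA -hw aE !mulrA mulrK.
have [s [t e]] := qcomm_nonreal nr hc; exists s, t.
by rewrite -[w](divrK w1u) e mulrDl mulrA.
Qed.

End RealScalars.

Section InversionGeometry.
Variable R : realType.
Local Notation H := (quat R).
Local Ltac unfold_dot := rewrite /qnorm2 /qdot /=.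

Lemma qdotDl (x y z : H) : qdot (x + y) z = qdot x z + qdot y z.
Proof. by unfold_dot; ring. Qed.
Lemma qdotBl (x y z : H) : qdot (x - y) z = qdot x z - qdot y z.
Proof. by unfold_dot; ring. Qed.
Lemma qdotZl s (x z : H) : qdot (realq s * x) z = s * qdot x z.
Proof. by unfold_dot; ring. Qed.
Lemma qdotC (x y : H) : qdot x y = qdot y x.
Proof. by unfold_dot; ring. Qed.
Lemma qdot_conj (x y : H) : qdot (qconj x) (qconj y) = qdot x y.
Proof. by unfold_dot; ring. Qed.
Lemma qnorm2Z s (x : H) : qnorm2 (realq s * x) = s ^+ 2 * qnorm2 x.
Proof. by unfold_dot; ring. Qed.
Lemma qconjK (x : H) : qconj (qconj x) = x.
Proof. by quat_ring. Qed.
Lemma qconj_lin s t (x y : H) :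
  qconj (realq s * x + realq t * y) = realq s * qconj x + realq t * qconj y.
Proof. by quat_ring. Qed.

Lemma invq_conj (x : H) : x^-1 = realq (qnorm2 x)^-1 * qconj x.
Proof. by rewrite -qinvE /qinv qscaleE. Qed.

Lemma lin_indep2_conj (u v : H) : lin_indep2 u v -> lin_indep2 (qconj u) (qconj v).
Proof.
move/lin_indep2E => indep; apply/lin_indep2E => s t; rewrite -qconj_lin => h.
by apply: indep; rewrite -[_ + _]qconjK h; quat_ring.
Qed.

Lemma invq_lin2 s t (u v : H) :
  exists s' t', (realq s * u + realq t * v)^-1 = realq s' * qconj u + realq t' * qconj v.
Proof.
pose n := (qnorm2 (realq s * u + realq t * v))^-1.
by exists (n * s), (n * t); rewrite invq_conj qconj_lin !realqM -!mulrA -mulrDr.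
Qed.

Definition gram2 (u v : H) := qnorm2 u * qnorm2 v - qdot u v ^+ 2.

Lemma gram2_gt0 (u v : H) : lin_indep2 u v -> 0 < gram2 u v.
Proof.
move=> indep; have nu : u != 0.
  apply/eqP => u0; have [] := (iffLR (lin_indep2E u v) indep 1 0).
    by rewrite u0 realq0 mulr0 mul0r addr0.
  by move/eqP; rewrite oner_eq0.
set w := realq (- qdot u v) * u + realq (qnorm2 u) * v.
have nw : w != 0.
  apply/eqP => w0; have [_ ] := iffLR (lin_indep2E u v) indep _ _ w0.
  by move/eqP; rewrite qnorm2_eq0 (negPf nu).
have -> : gram2 u v = qnorm2 w / qnorm2 u.
  by rewrite /w /gram2; unfold_dot; field; rewrite -/(qdot u u) -/(qnorm2 u) qnorm2_eq0.
by rewrite divr_gt0 ?qnorm2_gt0.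
Qed.

Lemma orth_decomp (z u v : H) : lin_indep2 u v ->
  exists p s t, [/\ z = p + realq s * u + realq t * v, qdot p u = 0 & qdot p v = 0].
Proof.
move=> indep; have G0 : gram2 u v != 0 by rewrite gt_eqF ?gram2_gt0.
move: G0; rewrite /gram2 => G0.
set s := (qdot z u * qnorm2 v - qdot z v * qdot u v) / (qnorm2 u * qnorm2 v - qdot u v ^+ 2).
set t := (qdot z v * qnorm2 u - qdot z u * qdot u v) / (qnorm2 u * qnorm2 v - qdot u v ^+ 2).
exists (z - realq s * u - realq t * v), s, t; split.
- by quat_ring.
- by rewrite !qdotBl !qdotZl (qdotC v u) /s /t -/(qnorm2 u); field.
- by rewrite !qdotBl !qdotZl /s /t -/(qnorm2 v); field.
Qed.

Definition det3 (a0 a1 a2 b0 b1 b2 c0 c1 c2 : R) :=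
  a0 * (b1 * c2 - b2 * c1) - a1 * (b0 * c2 - b2 * c0) + a2 * (b0 * c1 - b1 * c0).

(* The signed 3x3 minors of the 3x4 matrix with rows p, u, v. *)
Definition cross3 (p u v : H) : H :=
  Quat (det3 (qi p) (qj p) (qk p) (qi u) (qj u) (qk u) (qi v) (qj v) (qk v))
       (- det3 (qr p) (qj p) (qk p) (qr u) (qj u) (qk u) (qr v) (qj v) (qk v))
       (det3 (qr p) (qi p) (qk p) (qr u) (qi u) (qk u) (qr v) (qi v) (qk v))
       (- det3 (qr p) (qi p) (qj p) (qr u) (qi u) (qj u) (qr v) (qi v) (qj v)).

Lemma cross3_orth (p u v : H) s t :
  qdot (p + realq s * u + realq t * v) (cross3 p u v) = 0.
Proof. by rewrite /cross3 /det3; unfold_dot; ring. Qed.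

Lemma cross3_orthl (p u v : H) : qdot p (cross3 p u v) = 0.
Proof. by rewrite /cross3 /det3; unfold_dot; ring. Qed.

Lemma qnorm2_cross3 (p u v : H) : qdot p u = 0 -> qdot p v = 0 ->
  qnorm2 (cross3 p u v) = qnorm2 p * gram2 u v.
Proof.
move=> pu pv; transitivity (qnorm2 p * gram2 u v
  - qdot p u * (qdot p u * qnorm2 v - qdot u v * qdot p v)
  + qdot p v * (qdot p u * qdot u v - qnorm2 u * qdot p v)).
  by rewrite /cross3 /det3 /gram2; unfold_dot; ring.
by rewrite pu pv; ring.
Qed.

(* Inversion maps the affine hyperplane {z | <z, p> = |p|^2} into the 3-sphere
   through 0 centred at inv_center p. *)
Definition inv_center (p : H) : H := realq (2 * qnorm2 p)^-1 * qconj p.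

Lemma qnorm2_inv_center (p : H) : p != 0 -> qnorm2 (inv_center p) = (4 * qnorm2 p)^-1.
Proof.
move=> pn; rewrite /inv_center qnorm2Z.
have -> : qnorm2 (qconj p) = qnorm2 p by rewrite /qnorm2 qdot_conj.
by field; rewrite qnorm2_eq0.
Qed.

Lemma qnorm2_inv_sub_center (z p : H) : z != 0 -> p != 0 ->
  qnorm2 (z^-1 - inv_center p)
  = (qnorm2 z)^-1 - qdot z p / (qnorm2 z * qnorm2 p) + (4 * qnorm2 p)^-1.
Proof.
move=> zn pn; rewrite invq_conj /inv_center.
move: zn pn; rewrite -!qnorm2_eq0.
case: z => z0 z1 z2 z3; case: p => p0 p1 p2 p3; unfold_dot => h1 h2.
by field; rewrite h1 h2.
Qed.

Lemma on_2sphere_inv (p X y : H) : p != 0 -> qdot p X = 0 ->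
  (y != 0 -> qdot y^-1 p = qnorm2 p /\ qdot y^-1 X = 0) ->
  on_2sphere (inv_center p) (qconj X) (Num.sqrt (qnorm2 (inv_center p))) y.
Proof.
move=> pn pX hy; rewrite /on_2sphere sqr_sqrtr ?qnorm2_ge0 //.
have cX : qdot (inv_center p) (qconj X) = 0 by rewrite qdotZl qdot_conj pX mulr0.
have [->|yn] := eqVneq y 0.
  have -> : qsub 0 (inv_center p) = realq (-1) * inv_center p by quat_ring.
  by rewrite qnorm2Z qdotZl cX mulr0 expr2 mulrNN mulr1 mul1r.
have [zp zX] := hy yn; have zn : y^-1 != 0 by rewrite invr_eq0.
rewrite -[y]invrK; split.
  rewrite qnorm2_inv_sub_center // qnorm2_inv_center // zp.
  by field; rewrite !qnorm2_eq0 zn pn.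
by rewrite qdotBl cX subr0 invq_conj qdotZl qdot_conj zX mulr0.
Qed.

Definition cospherical_or_coplanar (P : H -> Prop) :=
  (exists c n r, 0 < r /\ n <> 0 /\ forall y, P y -> on_2sphere c n r y) \/
  (exists p u v, lin_indep2 u v /\ forall y, P y -> on_2plane p u v y).

Lemma inv_affine_plane_cospherical (z u v : H) (P : H -> Prop) : lin_indep2 u v ->
  (forall y, P y -> y != 0 -> exists s t, y^-1 = z + realq s * u + realq t * v) ->
  cospherical_or_coplanar P.
Proof.
move=> indep hP.
have [p [s0 [t0 [zE pu pv]]]] := orth_decomp z indep.
have {}hP y : P y -> y != 0 -> exists s t, y^-1 = p + realq s * u + realq t * v.
  move=> Py yn; have [s [t ->]] := hP y Py yn.
  by exists (s0 + s), (t0 + t); rewrite zE !realqD; quat_ring.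
have [p0|pn] := eqVneq p 0.
  right; exists 0, (qconj u), (qconj v); split; first exact: lin_indep2_conj.
  move=> y Py; have [->|yn] := eqVneq y 0.
    by exists 0, 0; rewrite !qscaleE realq0 !mul0r; quat_ring.
  have [s [t yE]] := hP y Py yn; rewrite p0 add0r in yE.
  have [s' [t' e]] := invq_lin2 s t u v.
  by exists s', t'; rewrite -[y]invrK yE e !qscaleE; quat_ring.
left; set X := cross3 p u v.
have Xn : X != 0.
  rewrite -qnorm2_eq0 /X qnorm2_cross3 // mulf_eq0 negb_or qnorm2_eq0 pn /=.
  by rewrite gt_eqF ?gram2_gt0.
exists (inv_center p), (qconj X), (Num.sqrt (qnorm2 (inv_center p))); split; last split.
- by rewrite sqrtr_gt0 qnorm2_inv_center // invr_gt0 mulr_gt0 ?qnorm2_gt0.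
- by move=> h; move: Xn; rewrite -[X]qconjK h; apply/negP/negPn/eqP; quat_ring.
move=> y Py; apply: on_2sphere_inv => // [|yn]; first exact: cross3_orthl.
have [s [t ->]] := hP y Py yn; split; last exact: cross3_orth.
by rewrite !qdotDl !qdotZl (qdotC u) (qdotC v) pu pv !mulr0 !addr0.
Qed.

End InversionGeometry.

Section FixedPoints.
Variable R : realType.
Local Notation H := (quat R).

(* (A x + B) (C x + D)^-1 = x with the denominator cleared; oo is fixed iff C = 0. *)
Definition flt_fixes (A B C D : H) (x : Hhat R) : Prop :=
  if x is Some y then A * y + B = y * (C * y + D) else C = 0.

Lemma on_2planeE (p u v x : H) :
  on_2plane p u v x <-> exists s t, x - p = realq s * u + realq t * v.
Proof.
split=> -[s [t e]]; exists s, t; move: e; rewrite ?qscaleE => e.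
  by rewrite e; quat_ring.
by rewrite -[x](subrK p) e; quat_ring.
Qed.

Lemma cospherical_or_coplanar_shift (P Q : H -> Prop) (x0 : H) :
  (forall x, Q x -> P (x - x0)) -> cospherical_or_coplanar P -> cospherical_or_coplanar Q.
Proof.
move=> QP [[c [n [r [r0 [n0 onS]]]]] | [p [u [v [indep onP]]]]].
  left; exists (x0 + c), n, r; do 2!split=> //; move=> x /QP /onS; rewrite /on_2sphere.
  by have -> : qsub x (x0 + c) = qsub (x - x0) c by quat_ring.
right; exists (x0 + p), u, v; split=> // x /QP /onP /on_2planeE [s [t e]].
by apply/on_2planeE; exists s, t; rewrite -e; quat_ring.
Qed.

Lemma on_common_of_cospherical (I : Type) (q : I -> Hhat R) :
  (forall i, q i <> None) -> cospherical_or_coplanar (fun x => exists i, q i = Some x) ->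
  on_common_2sphere_or_2plane q.
Proof.
move=> fin [[c [n [r [r0 [n0 onS]]]]] | [p [u [v [indep onP]]]]].
  left; exists c, n, r; do 2!split=> //; move=> i.
  by case E: (q i) (fin i) => [x|] // _; exists x; split=> //; apply: onS; exists i.
right; exists p, u, v; split=> // i; right.
by case E: (q i) (fin i) => [x|] // _; exists x; split=> //; apply: onP; exists i.
Qed.

Lemma general_position_finite_point (I : Type) (q : I -> Hhat R) :
  ~ on_common_2sphere_or_2plane q -> exists i x, q i = Some x.
Proof.
apply: boolp.contra_notP => none; right; exists 0, 1, (qI R).
split=> [|i]; first exact: lin_indep2_1I.
by left; case E: (q i) => [x|] //; case: none; exists i, x.
Qed.

Lemma fixes_diff_C0 (A B D x0 x : H) :
  A * x0 + B = x0 * D -> A * x + B = x * D -> (x - x0) * D = A * (x - x0).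
Proof. by move=> e0 e; rewrite mulrBl -e -e0 mulrBr opprD addrACA subrr addr0. Qed.

Lemma quadratic_inv (y A C D : H) :
  y != 0 -> y * C * y = A * y - y * D -> y^-1 * A - D * y^-1 = C.
Proof.
move=> yn quad; have yu : y \is a GRing.unit by rewrite qunitE.
have := congr1 (fun z => y^-1 * z * y^-1) quad.
rewrite /= !mulrA (mulVr yu) mul1r mulrK // => ->.
by rewrite mulrBr mulrBl mulKr // !mulrA mulrK.
Qed.

Lemma fixes_diff_inv (A B C D x0 x : H) :
  A * x0 + B = x0 * (C * x0 + D) -> A * x + B = x * (C * x + D) -> x - x0 != 0 ->
  (x - x0)^-1 * (A - x0 * C) - (C * x0 + D) * (x - x0)^-1 = C.
Proof.
move=> e0 e /quadratic_inv; apply.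
have h0 : (x * (C * x + D) - (A * x + B)) - (x0 * (C * x0 + D) - (A * x0 + B)) = 0.
  by rewrite -e -e0; quat_ring.
by apply/eqP; rewrite -subr_eq0; apply/eqP; apply: etrans h0; quat_ring.
Qed.

(* The differences of two solutions w = y^-1 of the Sylvester equation
   w A - D w = C intertwine A and D, so all such w lie on an affine 2-plane. *)
Lemma sylvester_inv_cospherical (A D C : H) (P : H -> Prop) : C != 0 ->
  (forall y, P y -> y != 0 -> y^-1 * A - D * y^-1 = C) -> cospherical_or_coplanar P.
Proof.
move=> Cn hP.
have [[y1 [Py1 y1n]] | none] := boolp.pselect (exists y1, P y1 /\ y1 != 0); last first.
  apply: (inv_affine_plane_cospherical (z := 0) (@lin_indep2_1I R)) => y Py yn.
  by case: none; exists y.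
have e1 := hP y1 Py1 y1n.
have nAD : ~ (is_realq D /\ A = D).
  case=> rD AD; move: e1; rewrite AD (realqE rD) realq_comm subrr => C0.
  by rewrite -C0 eqxx in Cn.
have [u [v [indep hw]]] := intertwiner_span nAD.
apply: (inv_affine_plane_cospherical (z := y1^-1) indep) => y Py yn.
have [s [t e]] : exists s t, y^-1 - y1^-1 = realq s * u + realq t * v.
  apply: hw; apply/eqP; rewrite -subr_eq0; apply/eqP.
  transitivity ((y^-1 * A - D * y^-1) - (y1^-1 * A - D * y1^-1)); first by quat_ring.
  by rewrite hP // e1 subrr.
by exists s, t; rewrite -addrA -e addrC subrK.
Qed.

Lemma fixes_general_position_C0 (I : Type) (q : I -> Hhat R) (A B C D : H) :
  ~ on_common_2sphere_or_2plane q -> (forall i, flt_fixes A B C D (q i)) -> C = 0.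
Proof.
move=> gp hfix; have [i0 [x0 qx0]] := general_position_finite_point gp.
apply/eqP; apply: contraT => Cn; exfalso; apply: gp.
have fin i : q i <> None by move=> Ei; move: (hfix i); rewrite Ei => C0; rewrite C0 eqxx in Cn.
have fix0 := hfix i0; rewrite qx0 /= in fix0.
pose P y := exists i, q i = Some (y + x0).
apply: (on_common_of_cospherical fin).
apply: (cospherical_or_coplanar_shift (P := P) (x0 := x0)).
  by move=> x [i Ei]; exists i; rewrite subrK.
apply: (sylvester_inv_cospherical (A := A - x0 * C) (D := C * x0 + D) Cn).
move=> y [i Ei] yn; have := hfix i; rewrite Ei /= => fixy.
by have := fixes_diff_inv fix0 fixy; rewrite addrK; apply.
Qed.

Lemma fixes_C0_scalar (I : Type) (q : I -> Hhat R) (A B D : H) :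
  ~ on_common_2sphere_or_2plane q -> (forall i, flt_fixes A B 0 D (q i)) ->
  B = 0 /\ exists l, A = realq l /\ D = realq l.
Proof.
move=> gp hfix.
have fixS i x : q i = Some x -> A * x + B = x * D.
  by move=> Ei; move: (hfix i); rewrite Ei /= mul0r add0r.
have [i0 [x0 qx0]] := general_position_finite_point gp.
have fix0 := fixS _ _ qx0.
have [[rA DA] | nAD] := boolp.pselect (is_realq A /\ D = A).
  split; last by exists (qr A); rewrite DA -realqE.
  move: fix0; rewrite DA (realqE rA) -realq_comm => e.
  by apply: (addrI (realq (qr A) * x0)); rewrite addr0.
have [u [v [indep hw]]] := intertwiner_span nAD.
exfalso; apply: gp; right; exists x0, u, v; split=> // i.
case E: (q i) => [x|]; [right; exists x; split=> // | by left].
by apply/on_2planeE; apply: hw; apply: fixes_diff_C0 fix0 (fixS _ _ E).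
Qed.

Lemma fixes_general_position_scalar (I : Type) (q : I -> Hhat R) (A B C D : H) :
  ~ on_common_2sphere_or_2plane q -> (forall i, flt_fixes A B C D (q i)) ->
  [/\ B = 0, C = 0 & exists l, A = realq l /\ D = realq l].
Proof.
move=> gp hfix; have C0 := fixes_general_position_C0 gp hfix.
rewrite C0 in hfix; have [B0 hl] := fixes_C0_scalar gp hfix.
by split.
Qed.

End FixedPoints.

Section Agreement.
Variable R : realType.
Local Notation H := (quat R).

(* The point of H^ with right homogeneous coordinates (P : Q). *)
Definition hratio (P Q : H) : Hhat R := if Q == 0 then None else Some (P * Q^-1).

Lemma flt_Some (a b c d x : H) : flt a b c d (Some x) = hratio (a * x + b) (c * x + d).
Proof. by rewrite /= qis0E. Qed.

Lemma flt_None (a b c d : H) : flt a b c d None = hratio a c.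
Proof. by rewrite /= qis0E. Qed.

Lemma hratio_eq (P Q P' Q' : H) : (P != 0) || (Q != 0) ->
  hratio P Q = hratio P' Q' -> exists w, P' = P * w /\ Q' = Q * w.
Proof.
rewrite /hratio => nz; have [Q0|Qn] := eqVneq Q 0; have [Q'0|Q'n] := eqVneq Q' 0 => // E.
  rewrite Q0 eqxx orbF in nz; exists (P^-1 * P').
  by rewrite mulVKr ?qunitE // Q0 Q'0 mul0r.
have Qu : Q \is a GRing.unit by rewrite qunitE.
have Q'u : Q' \is a GRing.unit by rewrite qunitE.
by move/Some_inj: E => E; exists (Q^-1 * Q'); rewrite mulrA E divrK // mulVKr.
Qed.

Lemma hratio_scale (P Q w : H) : w != 0 -> hratio (P * w) (Q * w) = hratio P Q.
Proof.
move=> wn; have wu : w \is a GRing.unit by rewrite qunitE.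
rewrite /hratio; have [->|Qn] := eqVneq Q 0; first by rewrite mul0r eqxx.
have Qu : Q \is a GRing.unit by rewrite qunitE.
have : Q * w \is a GRing.unit by rewrite unitrMl.
by rewrite qunitE => /negPf ->; rewrite invrM // mulrA mulrK.
Qed.

Lemma flt_scale (a b c d : H) l x : l != 0 ->
  flt (a * realq l) (b * realq l) (c * realq l) (d * realq l) x = flt a b c d x.
Proof.
rewrite -realq_eq0 => ln; case: x => [y|]; last by rewrite !flt_None hratio_scale.
rewrite !flt_Some -(hratio_scale (a * y + b) (c * y + d) ln).
by rewrite !mulrDl -!mulrA (realq_comm l y).
Qed.

Lemma mul2_colA (e f a b c d X Y : H) :
  (e * a + f * c) * X + (e * b + f * d) * Y = e * (a * X + b * Y) + f * (c * X + d * Y).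
Proof. by quat_ring. Qed.

Lemma mul_right_inverse2 (a b c d e f g h x y : H) :
  a * e + b * g = 1 -> a * f + b * h = 0 -> c * e + d * g = 0 -> c * f + d * h = 1 ->
  x = a * (e * x + f * y) + b * (g * x + h * y) /\ y = c * (e * x + f * y) + d * (g * x + h * y).
Proof.
by move=> r11 r12 r21 r22; rewrite -!mul2_colA r11 r12 r21 r22 !(mul1r, mul0r, addr0, add0r).
Qed.

Variables (a b c d e f g h : H).
Hypotheses (inv11 : e * a + f * c = 1) (inv12 : e * b + f * d = 0).
Hypotheses (inv21 : g * a + h * c = 0) (inv22 : g * b + h * d = 1).

(* [[e, f], [g, h]] = M^-1, so the arguments of flt_fixes are the entries of M^-1 M'. *)
Lemma flt_agree_fixes (a' b' c' d' : H) x : flt a b c d x = flt a' b' c' d' x ->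
  flt_fixes (e * a' + f * c') (e * b' + f * d') (g * a' + h * c') (g * b' + h * d') x.
Proof.
have hom X Y : (X != 0) || (Y != 0) ->
    hratio (a * X + b * Y) (c * X + d * Y) = hratio (a' * X + b' * Y) (c' * X + d' * Y) ->
    exists w, (e * a' + f * c') * X + (e * b' + f * d') * Y = X * w
           /\ (g * a' + h * c') * X + (g * b' + h * d') * Y = Y * w.
  have eX : e * (a * X + b * Y) + f * (c * X + d * Y) = X.
    by rewrite -mul2_colA inv11 inv12 mul1r mul0r addr0.
  have eY : g * (a * X + b * Y) + h * (c * X + d * Y) = Y.
    by rewrite -mul2_colA inv21 inv22 mul1r mul0r add0r.
  move=> XY /hratio_eq [].
    apply: contraTT XY; rewrite negb_or !negbK => /andP[/eqP P0 /eqP Q0].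
    by move: eX eY; rewrite P0 Q0 !mulr0 addr0 => <- <-; rewrite eqxx.
  move=> w [e1 e2]; exists w; split.
    by rewrite mul2_colA e1 e2 !mulrA -mulrDl eX.
  by rewrite mul2_colA e1 e2 !mulrA -mulrDl eY.
case: x => [y|] E /=; rewrite ?flt_Some ?flt_None in E.
  have nz : (y != 0) || ((1 : H) != 0) by rewrite oner_neq0 orbT.
  by have := hom y 1 nz; rewrite !mulr1 => /(_ E) [w [-> ->]]; rewrite mul1r.
have nz : ((1 : H) != 0) || ((0 : H) != 0) by rewrite oner_neq0.
by have := hom 1 0 nz; rewrite !mulr1 !mulr0 !addr0 => /(_ E) [w [_ ->]]; rewrite mul0r.
Qed.

End Agreement.

Theorem mainTheorem4 (R : realType) (q : 'I_5 -> Hhat R) :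
  injective q ->
  ~ on_common_2sphere_or_2plane q ->
  forall a b c d a' b' c' d' : quat R,
    GL2H a b c d -> GL2H a' b' c' d' ->
    (forall n : 'I_5, flt a b c d (q n) = flt a' b' c' d' (q n)) ->
    forall x : Hhat R, flt a b c d x = flt a' b' c' d' x.
Proof.
(* Distinctness of the q n is implied by the general-position hypothesis. *)
move=> _ gp a b c d a' b' c' d' [e [f [g [h [[r11 r12 r21 r22] [l11 l12 l21 l22]]]]]] M'inv agree.
have [B0 C0 [l [Al Dl]]] := fixes_general_position_scalar gp
  (fun n => flt_agree_fixes l11 l12 l21 l22 (agree n)).
have [ea' ec'] := mul_right_inverse2 a' c' r11 r12 r21 r22.
have [eb' ed'] := mul_right_inverse2 b' d' r11 r12 r21 r22.
rewrite Al C0 mulr0 addr0 in ea'; rewrite Al C0 mulr0 addr0 in ec'.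
rewrite B0 Dl mulr0 add0r in eb'; rewrite B0 Dl mulr0 add0r in ed'.
have ln : l != 0.
  apply/eqP => l0; case: M'inv => a'' [b'' [c'' [d'' [[inv11 _ _ _] _]]]].
  have : a' * a'' + b' * c'' = 1 := inv11.
  by rewrite ea' eb' l0 realq0 !mulr0 !mul0r addr0 => /eqP; rewrite eq_sym oner_eq0.
by move=> x; rewrite ea' eb' ec' ed' flt_scale.
Qed.
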